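(* Let $n\ge r\ge1$, let $\mathcal{O}\subset\mathbb{R}^{n\times r}$ be open with ${\rm St}(n,r)\subset\mathcal{O}$ and $f:\mathcal{O}\to\mathbb{R}$ continuously differentiable. A matrix $X\in\mathcal{S}_{+}^{n,r}$ satisfies \[ 0\in\nabla f(X)+{\rm N}_X M+\mathcal{N}_{\mathbb{R}_{+}^{n\times r}}(X) \] if and only if $-\nabla f(X)\in[\mathcal{T}_{\mathcal{S}_{+}^{n,r}}(X)]^{\circ}$.
   Context: $M={\rm St}(n,r):=\{X\in\mathbb{R}^{n\times r}: X^\top X=I_r\}$, with normal space ${\rm N}_XM=\{XS: S\in\mathbb{R}^{r\times r}\text{ symmetric}\}$. $\mathbb{R}_{+}^{n\times r}$ is the entrywise nonnegative cone, $\mathcal{S}_{+}^{n,r}:=\mathbb{R}_{+}^{n\times r}\cap{\rm St}(n,r)$, $\mathcal{N}_{\mathbb{R}_{+}^{n\times r}}(X)$ is the normal cone of convex analysis, $\mathcal{T}_{\Omega}(X)$ is the (Bouligand) tangent cone of $\Omega$ at $X$, and $K^\circ:=\{V:\langle V,H\rangle\le0\ \forall H\in K\}$ is the negative polar of a cone $K$ with respect to the trace inner product. (The first condition is the paper's definition of a stationary point of $\min_{X\in\mathcal{S}_{+}^{n,r}}f(X)$.) *)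

From HB Require Import structures.
From mathcomp Require Import all_boot all_order all_algebra.
From mathcomp Require Import all_classical all_reals all_analysis.
Set Implicit Arguments. Unset Strict Implicit. Unset Printing Implicit Defensive.
Import Order.TTheory GRing.Theory Num.Theory.
Import numFieldNormedType.Exports.
Local Open Scope classical_set_scope.
Local Open Scope ring_scope.

Section Defs.
Context {R : realType} {n r : nat}.
Notation M := 'M[R]_(n, r).

Definition mxinner (A B : M) : R := \tr (A^T *m B).

Definition Stiefel : set M := [set X | X^T *m X = 1%:M].

Definition nonneg_cone : set M := [set X | forall i j, 0 <= X i j].

Definition nonneg_Stiefel : set M := nonneg_cone `&` Stiefel.

Definition stiefel_normal_space (X : M) : set M :=
  [set V | exists S : 'M[R]_r, S^T = S /\ V = X *m S].

Definition normal_cone (C : set M) (X : M) : set M :=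
  [set V | forall Y, C Y -> mxinner V (Y - X) <= 0].

Definition tangent_cone (Omega : set M) (X : M) : set M :=
  [set H | exists (t : nat -> R) (Y : nat -> M),
     (forall k, 0 < t k) /\ t @ \oo --> (0 : R) /\
     (forall k, Omega (Y k)) /\
     (fun k => (t k)^-1 *: (Y k - X)) @ \oo --> H].

Definition polar (K : set M) : set M :=
  [set V | forall H, K H -> mxinner V H <= 0].

(* gradient w.r.t. the trace inner product: entries of the Frechet derivative *)
Definition grad (f : M -> R) (X : M) : M :=
  \matrix_(i, j) ('d f X (delta_mx i j : M)).

End Defs.

From HB Require Import structures.
From mathcomp Require Import all_boot all_order all_algebra.
From mathcomp Require Import all_classical all_reals all_analysis.
From mathcomp Require Import ring lra.
Import Order.TTheory GRing.Theory Num.Theory.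
Import numFieldNormedType.Exports.
Local Open Scope classical_set_scope.
Local Open Scope ring_scope.

(* For symmetric S, X S is orthogonal to the tangent cone of the Stiefel
   manifold at X (differentiate X^T X = 1 along secants), and a normal vector of
   the convex superset R_+^{n x r} is polar to every tangent vector of S_+;
   hence stationarity implies polarity.  Conversely, every row of X in S_+ has
   at most one nonzero entry.  If row i is supported in column j, moving column
   j towards e_i (or away from e_i when X_ij > 0) and renormalising stays in
   S_+ and yields the tangent directions +-(E_ij - X_ij X E_jj).  Polarity of W
   against them gives W_ij <= X_ij (W^T X)_jj, with equality where X_ij > 0.
   So for S equal to diag((W^T X)_jj) plus a large constant off the diagonal,
   W - X S is nonpositive and vanishes on the support of X, i.e. it is a normal
   vector of R_+^{n x r} at X. *)

Lemma mxtrace_mul_delta (R : comPzRingType) p q (A : 'M[R]_(p, q)) i j :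
  \tr (A *m delta_mx i j) = A j i.
Proof.
rewrite -(mul_delta_mx (0 : 'I_1)) mulmxA -colE mxtrace_mulC -rowE.
by rewrite /mxtrace big_ord1 !mxE.
Qed.

Lemma mul_mx_delta_entry (R : pzSemiRingType) m p q (A : 'M[R]_(m, p)) j (k : 'I_q) c a :
  (A *m delta_mx j k) c a = A c j * (a == k)%:R.
Proof.
rewrite mxE (bigD1 j) //= big1 ?addr0 => [|l lj]; rewrite mxE ?eqxx //.
by rewrite (negbTE lj) mulr0.
Qed.

Lemma ler_sum_term {R : numDomainType} {I : finType} {P : pred I} (F : I -> R) i :
  P i -> (forall j, P j -> 0 <= F j) -> F i <= \sum_(j | P j) F j.
Proof.
move=> Pi F0; rewrite (bigD1 i) //= lerDl sumr_ge0 // => j /andP[Pj _].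
exact: F0.
Qed.

Lemma cvg_sumr (R : numFieldType) (I : finType) (u : I -> nat -> R) (l : I -> R) :
  (forall i, u i @ \oo --> l i) -> (fun k => \sum_i u i k) @ \oo --> \sum_i l i.
Proof. by move=> ul; apply: cvg_big => //; exact: add_continuous. Qed.

Section Stiefel_cones.
Context {R : realType} {n r : nat}.
Notation M := 'M[R]_(n, r).
Implicit Types (A B C D X Y V W H : M) (S : 'M[R]_r).

Lemma mxinnerE A B : mxinner A B = \sum_i \sum_j A i j * B i j.
Proof.
rewrite /mxinner /mxtrace exchange_big; apply: eq_bigr => j _.
by rewrite !mxE; apply: eq_bigr => i _; rewrite mxE.
Qed.

Lemma mxinnerDl A B C : mxinner (A + B) C = mxinner A C + mxinner B C.
Proof. by rewrite /mxinner linearD mulmxDl mxtraceD. Qed.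

Lemma mxinnerBr A B C : mxinner A (B - C) = mxinner A B - mxinner A C.
Proof. by rewrite /mxinner mulmxBr linearB. Qed.

Lemma mxinnerZr A B a : mxinner A (a *: B) = a * mxinner A B.
Proof. by rewrite /mxinner -scalemxAr mxtraceZ. Qed.

Lemma mxinner_delta W i j : mxinner W (delta_mx i j) = W i j.
Proof. by rewrite /mxinner mxtrace_mul_delta mxE. Qed.

Lemma mxinner_mul_delta W X j :
  mxinner W (X *m delta_mx j j) = (W^T *m X) j j.
Proof. by rewrite /mxinner mulmxA mxtrace_mul_delta. Qed.

Lemma cvg_mxinner {A B : nat -> M} {A0 B0} :
  (forall i j, (fun k => A k i j) @ \oo --> A0 i j) ->
  (forall i j, (fun k => B k i j) @ \oo --> B0 i j) ->
  (fun k => mxinner (A k) (B k)) @ \oo --> mxinner A0 B0.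
Proof.
move=> AA0 BB0; under eq_cvg do rewrite mxinnerE.
by rewrite mxinnerE; do 2![apply: cvg_sumr => ?]; exact: cvgM.
Qed.

Lemma cvg_entry {D : nat -> M} {H} :
  D @ \oo --> H -> forall i j, (fun k => D k i j) @ \oo --> H i j.
Proof.
move=> DH i j.
by have := continuous_cvg _ (@coord_continuous _ _ _ i j H) DH; apply.
Qed.

Lemma cvg_mulmx_entry S {D : nat -> M} {H} :
  D @ \oo --> H -> forall i j, (fun k => (D k *m S) i j) @ \oo --> (H *m S) i j.
Proof.
move=> DH i j; rewrite mxE.
have -> : (fun k => (D k *m S) i j) = (fun k => \sum_c D k i c * S c j).
  by apply: funext => k; rewrite mxE.
by apply: cvg_sumr => c; apply: cvgMr_tmp; exact: (cvg_entry DH i c).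
Qed.

Lemma polarD {K : set M} {V W} : polar K V -> polar K W -> polar K (V + W).
Proof. by move=> KV KW H KH; rewrite mxinnerDl -[0]addr0 lerD ?KV ?KW. Qed.

Lemma tangent_cone_subset {A B : set M} {X} :
  A `<=` B -> tangent_cone A X `<=` tangent_cone B X.
Proof.
move=> AB H [t [Y [t0 [t_0 [AY YH]]]]].
by exists t, Y; do 3!split=> //; move=> k; exact: AB.
Qed.

Lemma normal_cone_polar_tangent {C Omega : set M} {X V} :
  Omega `<=` C -> normal_cone C X V -> polar (tangent_cone Omega X) V.
Proof.
move=> OC NV H [t [Y [t0 [_ [OY YH]]]]].
apply: (ler_cvg_to (cvg_mxinner (fun i j => cvg_cst (V i j)) (cvg_entry YH)) (cvg_cst 0)).
by near=> k; rewrite mxinnerZr pmulr_rle0 ?invr_gt0 //; apply: NV; exact: OC.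
Unshelve. all: by end_near. Qed.

Lemma Stiefel_secant {X D S t} : Stiefel X -> Stiefel (X + t *: D) -> S^T = S ->
  t != 0 -> mxinner (X *m S) D *+ 2 = - (t * mxinner (D *m S) D).
Proof.
move=> XtX YtY symS t0.
have XSDE : mxinner (X *m S) D = \tr (S *m (X^T *m D)).
  by rewrite /mxinner trmx_mul symS mulmxA.
have DSDE : mxinner (D *m S) D = \tr (S *m (D^T *m D)).
  by rewrite /mxinner trmx_mul symS mulmxA.
have DXE : \tr (S *m (D^T *m X)) = \tr (S *m (X^T *m D)).
  by rewrite -mxtrace_tr !trmx_mul trmxK symS mxtrace_mulC.
have := congr1 (fun B : 'M[R]_r => \tr (S *m B)) YtY; rewrite -[in RHS]XtX /=.
rewrite [(X + _)^T]linearD linearZ /= mulmxDl !mulmxDr -!scalemxAl -!scalemxAr.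
rewrite !mxtraceD !mxtraceZ DXE -XSDE -DSDE => expand.
have : t * (mxinner (X *m S) D *+ 2 + t * mxinner (D *m S) D) = 0.
  by rewrite -(subrr (\tr (S *m (X^T *m X)))) -[X in X - _]expand; ring.
by move/eqP; rewrite mulf_eq0 (negbTE t0) /= addr_eq0 => /eqP.
Qed.

Lemma mxinner_normal_tangent_Stiefel {X S H} : Stiefel X -> S^T = S ->
  tangent_cone Stiefel X H -> mxinner (X *m S) H = 0.
Proof.
move=> SX symS [t [Y [t0 [t_0 [SY YH]]]]].
pose D k := (t k)^-1 *: (Y k - X).
have YE k : Y k = X + t k *: D k.
  by rewrite /D scalerA divff ?gt_eqF // scale1r addrC subrK.
have secant k : mxinner (X *m S) (D k) = - (t k * mxinner (D k *m S) (D k)) / 2.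
  have SXD : Stiefel (X + t k *: D k) by rewrite -YE.
  rewrite -(Stiefel_secant SX SXD symS (lt0r_neq0 (t0 k))).
  by rewrite -mulr_natr; field.
have lim_quad : (fun k => mxinner (X *m S) (D k)) @ \oo -->
    - (0 * mxinner (H *m S) H) / 2.
  under eq_cvg do rewrite secant.
  apply: cvgMr_tmp; apply: cvgN; apply: cvgM => //.
  exact: cvg_mxinner (cvg_mulmx_entry S YH) (cvg_entry YH).
rewrite mul0r oppr0 mul0r in lim_quad.
have lim_lin : (fun k => mxinner (X *m S) (D k)) @ \oo --> mxinner (X *m S) H.
  by apply: cvg_mxinner (cvg_entry YH) => i j; exact: cvg_cst.
exact: (cvg_unique _ lim_lin lim_quad).
Qed.

Lemma Stiefel_dot {X} : Stiefel X -> forall a b, \sum_c X c a * X c b = (a == b)%:R.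
Proof.
move=> XtX a b; have := congr1 (fun B : 'M[R]_r => B a b) XtX; rewrite !mxE => <-.
by apply: eq_bigr => c _; rewrite mxE.
Qed.

Lemma Stiefel_entry_sqr_le1 X i j : Stiefel X -> X i j ^+ 2 <= 1.
Proof.
move=> SX; have <- : \sum_c X c j * X c j = 1 by rewrite (Stiefel_dot SX) eqxx.
rewrite expr2; apply: (ler_sum_term (P := xpredT) (fun c => X c j * X c j)) => // c _.
by rewrite -expr2 sqr_ge0.
Qed.

Lemma nonneg_Stiefel_row_support {X a b k} :
  nonneg_Stiefel X -> 0 < X a b -> k != b -> X a k = 0.
Proof.
move=> [X0 SX] Xab kb.
have dot0 : \sum_c X c b * X c k = 0 by rewrite (Stiefel_dot SX) eq_sym (negbTE kb).
have /(_ a isT) /eqP := psumr_eq0P (fun c _ => mulr_ge0 (X0 c b) (X0 c k)) dot0.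
by rewrite mulf_eq0 gt_eqF //= => /eqP.
Qed.

Definition tilt X i j (p q : R) : M :=
  X + (p - 1) *: (X *m delta_mx j j) + q *: delta_mx i j.

Lemma tiltE X i j p q c a :
  tilt X i j p q c a = if a == j then p * X c j + q * (c == i)%:R else X c a.
Proof.
rewrite /tilt 3!mxE mul_mx_delta_entry !mxE.
by case: eqP => [-> | _] /=; rewrite ?andbT ?andbF /=; ring.
Qed.

Lemma tilt_nonneg X i j p q : nonneg_cone X -> 0 <= p -> 0 <= p * X i j + q ->
  nonneg_cone (tilt X i j p q).
Proof.
move=> X0 p0 pq0 c a; rewrite tiltE; case: eqP => _; last exact: X0.
by have [-> | ci] := eqVneq c i; rewrite ?mulr1 // mulr0 addr0 mulr_ge0.
Qed.

Lemma tilt_Stiefel X i j p q : Stiefel X -> (forall b, b != j -> X i b = 0) ->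
  p ^+ 2 + 2 * p * q * X i j + q ^+ 2 = 1 -> Stiefel (tilt X i j p q).
Proof.
move=> SX rowi pq; apply/matrixP => a b; rewrite !mxE.
under eq_bigr do rewrite mxE !tiltE.
have col_dot F : \sum_c (p * X c j + q * (c == i)%:R) * F c =
    p * \sum_c X c j * F c + q * F i.
  under eq_bigr do rewrite mulrDl -!mulrA.
  rewrite big_split /= -!mulr_sumr; congr (_ + q * _).
  by under eq_bigr do rewrite mulr_natl mulrb; rewrite -big_mkcond big_pred1_eq.
have [aj | aj] := eqVneq a j; have [bj | bj] := eqVneq b j;
  rewrite ?aj ?bj ?eqxx ?(negbTE aj) ?(negbTE bj) /=.
- rewrite col_dot; under eq_bigr do rewrite mulrC.
  by rewrite col_dot (Stiefel_dot SX) !eqxx /= !mulr1 mulr1n -[RHS]pq; ring.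
- by rewrite col_dot (Stiefel_dot SX) rowi // eq_sym (negbTE bj) mulr0 mulr0 addr0.
- under eq_bigr do rewrite mulrC.
  by rewrite col_dot (Stiefel_dot SX) rowi // eq_sym (negbTE aj) mulr0 mulr0 addr0.
- exact: (Stiefel_dot SX a b).
Qed.

Lemma tilt_subE X i j p q :
  tilt X i j p q - X = (p - 1) *: (X *m delta_mx j j) + q *: delta_mx i j.
Proof. by rewrite /tilt -[X + _ + _]addrA addrC addrK. Qed.

Definition tilt_dir X i j : M := delta_mx i j - X i j *: (X *m delta_mx j j).

Lemma mxinner_tilt_dir W X i j :
  mxinner W (tilt_dir X i j) = W i j - X i j * (W^T *m X) j j.
Proof. by rewrite mxinnerBr mxinnerZr mxinner_delta mxinner_mul_delta. Qed.

Lemma tangent_tilt_dir X i j s (t : nat -> R) :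
  nonneg_Stiefel X -> (forall b, b != j -> X i b = 0) ->
  (forall k, 0 < t k) -> t @ \oo --> 0 -> (forall k, 0 < X i j + s * t k) ->
  tangent_cone nonneg_Stiefel X (s *: tilt_dir X i j).
Proof.
move=> [X0 SX] rowi t0 t_0 pos; set x := X i j in pos *.
(* Column j of the curve is x_j + s u e_i renormalised, and g u is the squared
   norm of x_j + s u e_i. *)
pose g u := 1 + u * (2 * s * x + s ^+ 2 * u).
have gE u : g u = (x + s * u) ^+ 2 + (1 - x ^+ 2) by rewrite /g; ring.
have x2 : x ^+ 2 <= 1 by exact: Stiefel_entry_sqr_le1.
pose N k := Num.sqrt (g (t k)).
have N2 k : N k ^+ 2 = g (t k) by rewrite sqr_sqrtr // gE addr_ge0 ?sqr_ge0 ?subr_ge0.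
have N0 k : 0 < N k.
  by rewrite sqrtr_gt0 gE; have := exprn_gt0 2 (pos k); lra.
have N_1 : N @ \oo --> (1 : R).
  have g_lim : (fun k => g (t k)) @ \oo --> g 0.
    apply: cvgD; first exact: cvg_cst.
    apply: cvgM => //; apply: cvgD; first exact: cvg_cst.
    exact: cvgMl_tmp.
  have g0 : g 0 = 1 by rewrite /g mul0r addr0.
  by have := continuous_cvg _ (@sqrt_continuous R (g 0)) g_lim; rewrite g0 sqrtr1; apply.
pose p k := (N k)^-1.
pose q k := s * t k / N k.
have tilt_in k : nonneg_Stiefel (tilt X i j (p k) (q k)).
  have Nk0 : N k != 0 by rewrite gt_eqF.
  split.
    apply: tilt_nonneg => //; first by rewrite invr_ge0 ltW.
    have -> : p k * x + q k = (x + s * t k) / N k by rewrite /p /q; field.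
    by rewrite divr_ge0 // ltW.
  apply: tilt_Stiefel => //.
  apply: (@etrans _ _ (g (t k) / N k ^+ 2)); first by rewrite /p /q /g -/x; field.
  by rewrite -N2 divff // expf_neq0.
have lim_p : (fun k => (t k)^-1 * (p k - 1)) @ \oo --> - (s * x).
  have pE k : (t k)^-1 * (p k - 1) = - (2 * s * x + s ^+ 2 * t k) / (N k * (1 + N k)).
    have tk0 : t k != 0 by rewrite gt_eqF.
    have N1k0 : 1 + N k != 0 by rewrite gt_eqF // addr_gt0.
    have -> : 2 * s * x + s ^+ 2 * t k = (N k ^+ 2 - 1) / t k by rewrite N2 /g; field.
    by rewrite /p; field; rewrite tk0 N1k0 gt_eqF.
  under eq_cvg do rewrite pE.
  have -> : - (s * x) = - (2 * s * x + s ^+ 2 * 0) / (1 * (1 + 1)) by field.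
  apply: cvgM; first by apply: cvgN; apply: cvgD; [exact: cvg_cst | exact: cvgMl_tmp].
  apply: cvgV; first by rewrite mul1r lt0r_neq0 // addr_gt0.
  by apply: cvgM => //; apply: cvgD => //; exact: cvg_cst.
have lim_q : (fun k => (t k)^-1 * q k) @ \oo --> s.
  have qE k : (t k)^-1 * q k = s * (N k)^-1 by rewrite /q; field; rewrite !gt_eqF.
  under eq_cvg do rewrite qE.
  by have := cvgMl_tmp (a := s) (cvgV (oner_neq0 R) N_1); rewrite invr1 mulr1; apply.
exists t, (fun k => tilt X i j (p k) (q k)); do 3!split => //.
under eq_cvg do rewrite tilt_subE scalerDr !scalerA.
have -> : s *: tilt_dir X i j = (- (s * x)) *: (X *m delta_mx j j) + s *: delta_mx i j.
  by rewrite /tilt_dir scalerBr scalerA addrC scaleNr.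
by apply: cvgD; apply: cvgZ => //; exact: cvg_cst.
Qed.

Lemma tilt_dir_tangent {X i j} : nonneg_Stiefel X -> (forall b, b != j -> X i b = 0) ->
  tangent_cone nonneg_Stiefel X (tilt_dir X i j).
Proof.
move=> XS rowi; rewrite -[tilt_dir X i j]scale1r.
have h_gt0 k : 0 < harmonic k :> R by rewrite /harmonic invr_gt0.
apply: (tangent_tilt_dir _ _ _ _ harmonic) => // [|k]; first exact: cvg_harmonic.
by have := XS.1 i j; have := h_gt0 k; lra.
Qed.

Lemma tilt_dir_opp_tangent {X i j} : nonneg_Stiefel X -> 0 < X i j ->
  tangent_cone nonneg_Stiefel X (- tilt_dir X i j).
Proof.
move=> XS Xij; rewrite -scaleN1r.
have h_gt0 k : 0 < harmonic k :> R by rewrite /harmonic invr_gt0.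
have h_le1 k : harmonic k <= 1 :> R by rewrite /harmonic invf_le1 // ler1n.
apply: (tangent_tilt_dir _ _ _ _ (fun k => X i j / 2 * harmonic k)) => // [b bj|k||k].
- exact: nonneg_Stiefel_row_support XS Xij bj.
- by rewrite mulr_gt0 // divr_gt0.
- by have := cvgMl_tmp (a := X i j / 2) cvg_harmonic; rewrite mulr0; apply.
- by have := h_gt0 k; have := h_le1 k; nra.
Qed.

Lemma polar_tilt_dir_le {W X i j} : polar (tangent_cone nonneg_Stiefel X) W ->
  nonneg_Stiefel X -> (forall b, b != j -> X i b = 0) ->
  W i j <= X i j * (W^T *m X) j j.
Proof.
move=> polW XS rowi.
by have := polW _ (tilt_dir_tangent XS rowi); rewrite mxinner_tilt_dir subr_le0.
Qed.

Lemma polar_tilt_dir_eq {W X i j} : polar (tangent_cone nonneg_Stiefel X) W ->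
  nonneg_Stiefel X -> 0 < X i j -> W i j = X i j * (W^T *m X) j j.
Proof.
move=> polW XS Xij; apply/le_anti/andP; split.
  by apply: polar_tilt_dir_le => // b; exact: nonneg_Stiefel_row_support.
have := polW _ (tilt_dir_opp_tangent XS Xij).
by rewrite -scaleN1r mxinnerZr mxinner_tilt_dir mulN1r oppr_le0 subr_ge0.
Qed.

Lemma nonpos_compl_normal_cone X V : (forall a b, V a b <= 0) ->
  (forall a b, V a b * X a b = 0) -> normal_cone nonneg_cone X V.
Proof.
move=> Vle0 VX0 Y Y0; rewrite mxinnerBr !mxinnerE.
rewrite [X in _ - X]big1 => [|a _]; last by rewrite big1.
rewrite subr0 sumr_le0 // => a _; rewrite sumr_le0 // => b _.
by rewrite mulr_le0_ge0.
Qed.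

Lemma polar_tangent_decomposition {X W} : nonneg_Stiefel X ->
  polar (tangent_cone nonneg_Stiefel X) W ->
  exists S, S^T = S /\ normal_cone nonneg_cone X (W - X *m S).
Proof.
move=> XS polW; have X0 := XS.1.
pose d := W^T *m X.
(* (X a k)^-1 = 0 where X a k = 0, so C bounds |W a b| / X a k over the
   positive entries of X. *)
pose C := (\sum_(ab : 'I_n * 'I_r) `|W ab.1 ab.2|) *
          \sum_(ak : 'I_n * 'I_r) (X ak.1 ak.2)^-1.
pose S : 'M[R]_r := \matrix_(k, l) if k == l then d k k else C.
have C_bound a b k : 0 < X a k -> W a b <= C * X a k.
  move=> Xak; apply: le_trans (ler_norm _) _; rewrite -ler_pdivrMr //.
  apply: ler_pM; rewrite ?invr_ge0 ?normr_ge0 ?(ltW Xak) //.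
    exact: (ler_sum_term (P := xpredT) (fun ab : 'I_n * 'I_r => `|W ab.1 ab.2|) (a, b)).
  apply: (ler_sum_term (P := xpredT) (fun ak : 'I_n * 'I_r => (X ak.1 ak.2)^-1) (a, k))
    => // -[? ?] _.
  by rewrite invr_ge0.
have VE a b : (W - X *m S) a b = W a b - (X a b * d b b + C * \sum_(k | k != b) X a k).
  rewrite 3!mxE (bigD1 b) //= [S b b]mxE eqxx mulr_sumr; congr (_ - (_ + _)).
  by apply: eq_bigr => k kb; rewrite mxE (negbTE kb) mulrC.
exists S; split; first by apply/matrixP => k l; rewrite !mxE eq_sym; case: eqP => [-> |].
apply: nonpos_compl_normal_cone => a b; rewrite VE.
- have [[k [kb Xak]] | supp] := pselect (exists k, k != b /\ 0 < X a k).
    have -> : X a b = 0 by apply: (nonneg_Stiefel_row_support XS Xak); rewrite eq_sym.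
    rewrite mul0r add0r subr_le0; apply: le_trans (C_bound a b k Xak) _.
    apply: ler_wpM2l; last exact: (ler_sum_term (fun k => X a k)).
    by apply: mulr_ge0; apply: sumr_ge0 => -[? ?] _; rewrite ?normr_ge0 ?invr_ge0.
  have row_a k : k != b -> X a k = 0.
    move=> kb; apply/le_anti; rewrite X0 andbT leNgt; apply/negP => Xak.
    by apply: supp; exists k.
  by rewrite big1 // mulr0 addr0 subr_le0; exact: polar_tilt_dir_le.
- have := X0 a b; rewrite le_eqVlt => /predU1P [<- | Xab]; first by rewrite mulr0.
  rewrite big1 => [|k kb]; last exact: nonneg_Stiefel_row_support XS Xab kb.
  by rewrite mulr0 addr0 -polar_tilt_dir_eq // subrr mul0r.
Qed.

End Stiefel_cones.

Theorem lemma4p3 (R : realType) (n r : nat) (O : set 'M[R]_(n, r))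
  (f : 'M[R]_(n, r) -> R) (X : 'M[R]_(n, r)) :
  (1 <= r)%N -> (r <= n)%N ->
  open O -> Stiefel `<=` O ->
  (forall Y, O Y -> differentiable f Y) ->
  {within O, continuous (grad f)} ->
  nonneg_Stiefel X ->
  ((exists N V, stiefel_normal_space X N /\ normal_cone nonneg_cone X V /\
               grad f X + N + V = 0)
   <-> polar (tangent_cone nonneg_Stiefel X) (- grad f X)).
Proof.
move=> _ _ _ _ _ _ XS; split.
  move=> [_ [V [[S [symS ->]] [NV sum0]]]].
  have -> : - grad f X = X *m S + V by apply/eqP; rewrite eq_sym -addr_eq0 addrC addrA sum0.
  apply: polarD; last exact: normal_cone_polar_tangent (@subIsetl _ _ _) NV.
  move=> H /(tangent_cone_subset (@subIsetr _ _ _)) TH.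
  by rewrite (mxinner_normal_tangent_Stiefel XS.2 symS TH).
move=> polW; have [S [symS NV]] := polar_tangent_decomposition XS polW.
exists (X *m S), (- grad f X - X *m S); do !split => //; first by exists S.
by rewrite -opprD subrr.
Qed.
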